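(* Suppose there is a function $f:\mathbb{N}\to\mathbb{R}$ with $\lim_{n\to\infty} f(n)=\infty$ such that for every $n$, every instance with $n$ agents (with monotone valuations) and exactly $m=n+\lfloor f(n)\rfloor$ goods admits an EFX allocation. Then for every $n$ and $m$, every instance with $n$ agents (with monotone valuations) and $m$ goods admits an EFX allocation. *)

From mathcomp Require Import all_boot all_order all_algebra.
From mathcomp Require Import reals.
Set Implicit Arguments. Unset Strict Implicit. Unset Printing Implicit Defensive.
Import Order.TTheory GRing.Theory Num.Theory.
Local Open Scope ring_scope.

Definition monotone_val (R : realType) (m : nat) (v : {set 'I_m} -> R) : Prop :=
  forall S T : {set 'I_m}, S \subset T -> v S <= v T.

Definition is_allocation (n m : nat) (X : 'I_n -> {set 'I_m}) : Prop :=
  (forall i j : 'I_n, i != j -> [disjoint X i & X j]) /\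
  (forall g : 'I_m, exists i : 'I_n, g \in X i).

Definition is_EFX (R : realType) (n m : nat) (v : 'I_n -> {set 'I_m} -> R)
  (X : 'I_n -> {set 'I_m}) : Prop :=
  forall (i j : 'I_n) (g : 'I_m), g \in X j -> v i (X j :\ g) <= v i (X i).

Definition EFX_exists (R : realType) (n m : nat) (v : 'I_n -> {set 'I_m} -> R) : Prop :=
  exists X : 'I_n -> {set 'I_m}, is_allocation X /\ is_EFX v X.

Definition EFX_always (R : realType) (n m : nat) : Prop :=
  forall v : 'I_n -> {set 'I_m} -> R,
    (forall i, monotone_val (v i)) -> EFX_exists v.

From mathcomp Require Import all_boot all_order all_algebra reals lra perm.
Import Order.TTheory GRing.Theory Num.Theory.
Set Implicit Arguments. Unset Strict Implicit. Unset Printing Implicit Defensive.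
Local Open Scope ring_scope.

(* Both reductions embed a small instance into a larger one.  Extra goods are
   ignored by pulling valuations back along an injection of goods.  An extra
   agent together with an extra good gs is absorbed by duplicating some agent
   i0 and letting both copies value gs above everything else: in any EFX
   allocation the holder of gs then holds nothing but gs (otherwise the other
   copy of i0 would envy it up to any good), so deleting that agent and gs
   leaves an EFX allocation of the original goods among the n remaining
   agents.  Iterating, EFX for (n', n' + floor (f n')) with n' large yields
   EFX for any (n, m). *)

Lemma allocation_notin (n m : nat) (X : 'I_n -> {set 'I_m}) (a b : 'I_n)
    (g : 'I_m) :
  is_allocation X -> g \in X a -> b != a -> g \notin X b.
Proof.
move=> [Xdisj _] g_a ba; apply: contraL (Xdisj _ _ ba) => g_b.
by apply/pred0Pn; exists g; apply/andP.
Qed.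

Section PullbackGoods.
Variables (R : realType) (m m' : nat) (w : 'I_m -> 'I_m').

Lemma monotone_val_preim (v : {set 'I_m} -> R) :
  monotone_val v -> monotone_val (fun S : {set 'I_m'} => v (w @^-1: S)).
Proof. by move=> vmono S T /(preimsetS w); apply: vmono. Qed.

Lemma preimsetD1_inj (S : {set 'I_m'}) (g : 'I_m) : injective w ->
  w @^-1: (S :\ w g) = (w @^-1: S) :\ g.
Proof. by move=> w_inj; apply/setP => x; rewrite !inE (inj_eq w_inj). Qed.

Lemma is_allocation_preim (n k : nat) (X : 'I_k -> {set 'I_m'})
    (s : 'I_n -> 'I_k) :
  is_allocation X -> injective s -> (forall g, exists i, w g \in X (s i)) ->
  is_allocation (fun i => w @^-1: X (s i)).
Proof.
move=> [Xdisj _] s_inj s_cover; split=> [i j ij|g]; last first.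
  by have [i gi] := s_cover g; exists i; rewrite inE.
have /Xdisj : s i != s j by apply: contra ij => /eqP/s_inj ->.
by rewrite -!setI_eq0 -preimsetI => /eqP->; rewrite preimset0.
Qed.

End PullbackGoods.

Lemma EFX_always_fewer_goods (R : realType) (n m m' : nat) :
  (m <= m')%N -> EFX_always R n m' -> EFX_always R n m.
Proof.
move=> le_mm' EFX' v vmono; pose w := widen_ord le_mm'.
have w_inj : injective w by move=> x y /(congr1 val) /= /val_inj.
have [X [XA Xefx]] := EFX' _ (fun i => monotone_val_preim w (vmono i)).
exists (fun i => w @^-1: X i); split.
  by apply: (is_allocation_preim XA) => // g; apply: XA.2.
move=> i j g; rewrite inE -preimsetD1_inj //; exact: Xefx.
Qed.

Section DuplicateAgent.
Variables (R : realType) (n m : nat) (v : 'I_n -> {set 'I_m} -> R) (i0 : 'I_n).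
Hypothesis vmono : forall i, monotone_val (v i).

Let w : 'I_m -> 'I_m.+1 := widen_ord (leqnSn m).
Let gs : 'I_m.+1 := ord_max.

Let w_inj : injective w.
Proof. by move=> x y /(congr1 val) /= /val_inj. Qed.

Let w_neq_gs (g : 'I_m) : w g != gs.
Proof. by rewrite -val_eqE /= neq_ltn ltn_ord. Qed.

Let preim_gs : w @^-1: [set gs] = set0.
Proof. by apply/setP => g; rewrite !inE (negbTE (w_neq_gs g)). Qed.

(* The new agent [ord_max] is a second copy of [i0]. *)
Let agent_of (a : 'I_n.+1) : 'I_n :=
  if unlift ord_max a is Some i then i else i0.

Let agent_of_lift (i : 'I_n) : agent_of (lift ord_max i) = i.
Proof. by rewrite /agent_of liftK. Qed.

Let agent_of_max : agent_of ord_max = i0.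
Proof. by rewrite /agent_of unlift_none. Qed.

Let bonus := v i0 setT - v i0 set0 + 1.

Let bonus_gt0 : 0 < bonus.
Proof. by have := vmono i0 (sub0set setT); rewrite /bonus; lra. Qed.

Let V (a : 'I_n.+1) (S : {set 'I_m.+1}) : R :=
  v (agent_of a) (w @^-1: S) +
  (if (agent_of a == i0) && (gs \in S) then bonus else 0).

Let V_monotone a : monotone_val (V a).
Proof.
move=> S T ST; apply: lerD; first exact: monotone_val_preim.
case: (_ == _) => //=; have /subsetP/(_ gs) := ST.
case: (gs \in S) => [/(_ isT)->//|_]; case: ifP => // _; exact: ltW.
Qed.

Let V_ge a (S : {set 'I_m.+1}) : v (agent_of a) (w @^-1: S) <= V a S.
Proof. by rewrite lerDl; case: ifP => // _; apply: ltW. Qed.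

Let holder_singleton (X : 'I_n.+1 -> {set 'I_m.+1}) (a : 'I_n.+1) :
  is_allocation X -> is_EFX V X -> gs \in X a -> X a = [set gs].
Proof.
move=> XA Xefx gs_a; apply/setP => g; rewrite inE.
apply/idP/eqP => [g_a|->//]; apply/eqP; apply: contraT => g_gs.
pose t := if a == ord_max then lift ord_max i0 else ord_max.
have t_a : t != a.
  by rewrite /t; case: (eqVneq a ord_max) => [->|]; rewrite eq_sym ?neq_lift.
have t_i0 : agent_of t = i0 by rewrite /t; case: ifP.
have gs_t : gs \notin X t by apply: allocation_notin XA gs_a t_a.
have := Xefx t a g g_a; rewrite /V t_i0 eqxx (negbTE gs_t) !inE eq_sym g_gs gs_a.
have := vmono i0 (sub0set (w @^-1: (X a :\ g))).
have := vmono i0 (subsetT (w @^-1: X t)).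
by rewrite /bonus /=; lra.
Qed.

Let EFX_exists_duplicate_agent : EFX_exists V -> EFX_exists v.
Proof.
move=> [X [XA Xefx]]; have [a gs_a] := XA.2 gs.
have Xa := holder_singleton XA Xefx gs_a.
have V_own b : b != a -> V b (X b) = v (agent_of b) (w @^-1: X b).
  move=> ba; have gs_b : gs \notin X b by apply: allocation_notin XA gs_a ba.
  by rewrite /V (negbTE gs_b) andbF addr0.
(* Agent [i] keeps its own copy, except that the copy [a] which receives gs is
   replaced by the copy [ord_max] of [i0]. *)
pose sg i := tperm a ord_max (lift ord_max i).
have sg_neq i : sg i != a.
  rewrite /sg; case: tpermP => [<-|/eqP|/eqP //]; first by rewrite neq_lift.
  by rewrite eq_sym (negbTE (neq_lift _ _)).
have sg_inj : injective sg by move=> x y /perm_inj /lift_inj.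
have sg_cover g : exists i, w g \in X (sg i).
  have [b gb] := XA.2 (w g).
  have ba : b != a.
    by apply: contraTneq gb => ->; rewrite Xa inE (negbTE (w_neq_gs g)).
  case: (unliftP ord_max (tperm a ord_max b)) => [k tb|tb].
    by exists k; rewrite /sg -tb tpermK.
  by move: ba; rewrite -(tpermK a ord_max b) tb tpermR eqxx.
exists (fun k : 'I_n => w @^-1: X (sg k)); split.
  exact: is_allocation_preim XA sg_inj sg_cover.
move=> i j g; rewrite inE -preimsetD1_inj // => g_j.
case: (eqVneq (agent_of (sg i)) i) => [own|not_own].
  rewrite -{2}own -V_own // -{1}own.
  exact: le_trans (V_ge _ _) (Xefx _ _ _ g_j).
have lift_a : lift ord_max i = a.
  apply: contraNeq not_own => la.
  by rewrite /sg tpermD ?agent_of_lift ?neq_lift // eq_sym.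
have i_i0 : i != i0.
  apply: contraNneq not_own => i_eq.
  by rewrite /sg lift_a tpermL agent_of_max i_eq.
have := Xefx a _ _ g_j; rewrite {2}/V -lift_a agent_of_lift (negbTE i_i0) addr0.
rewrite lift_a Xa preim_gs => le_empty.
apply: le_trans (le_trans le_empty (vmono i (sub0set _))).
by rewrite -{1}(agent_of_lift i) lift_a; apply: V_ge.
Qed.

Lemma EFX_exists_of_EFX_always_succ :
  EFX_always R n.+1 m.+1 -> EFX_exists v.
Proof. by move=> EFX'; apply/EFX_exists_duplicate_agent/EFX'. Qed.

End DuplicateAgent.

Lemma EFX_always_drop_agent (R : realType) (n m : nat) :
  (0 < n)%N -> EFX_always R n.+1 m.+1 -> EFX_always R n m.
Proof.
move=> n_gt0 EFX' v vmono.
exact: (EFX_exists_of_EFX_always_succ (Ordinal n_gt0)).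
Qed.

Lemma EFX_always_drop_agents (R : realType) (n m d : nat) :
  (0 < n)%N -> EFX_always R (n + d) (m + d) -> EFX_always R n m.
Proof.
move=> n_gt0; elim: d => [|d IH]; first by rewrite !addn0.
rewrite !addnS => EFX'; apply/IH/(EFX_always_drop_agent _ EFX').
exact: ltn_addr.
Qed.

Theorem theorem2 (R : realType) (f : nat -> R)
  (hf : forall M : R, exists N : nat, forall n : nat, (N <= n)%N -> M <= f n)
  (hEFX : forall n m : nat, (0 < n)%N ->
            (m%:Z = n%:Z + Num.floor (f n))%R -> EFX_always R n m) :
  forall n m : nat, (0 < n)%N -> EFX_always R n m.
Proof.
move=> n m n_gt0.
have [N f_ge] := hf m%:R.
pose n' := maxn n N; pose k := `|Num.floor (f n')|%N.
have m_le : (m%:Z <= Num.floor (f n'))%R.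
  by rewrite floor_ge_int; apply: f_ge; rewrite leq_maxr.
have k_eq : (k%:Z = Num.floor (f n'))%R by rewrite gez0_abs // (le_trans _ m_le).
have le_nn' : (n <= n')%N by rewrite leq_maxl.
have EFX_n' : EFX_always R n' (n' + k).
  by apply: hEFX; [exact: leq_trans le_nn' | rewrite PoszD k_eq].
apply: (@EFX_always_drop_agents R n m (n' - n) n_gt0).
rewrite subnKC //; apply: EFX_always_fewer_goods EFX_n'.
by rewrite addnC leq_add ?leq_subr // -lez_nat k_eq.
Qed.
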